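(* Let $n\ge 1$ and let $\sigma$ be any permutation of $\{1,\dots,n\}$. Let $P_\sigma$ be the unitary on $n$ qubits that permutes the qubits according to $\sigma$, i.e. $P_\sigma|b_1 b_2\cdots b_n\rangle = |b_{\sigma^{-1}(1)} b_{\sigma^{-1}(2)}\cdots b_{\sigma^{-1}(n)}\rangle$ for all $b_i\in\{0,1\}$. Then: (i) $P_\sigma$ can be embedded, using $n$ ancillae, in a circuit consisting of 4 layers each of which contains only controlled-not gates (acting on disjoint pairs of qubits); (ii) $P_\sigma$ is equal (with no ancillae) to a circuit consisting of 6 layers each of which contains only controlled-not gates (acting on disjoint pairs of qubits).
   Context: Qubits have computational basis $|0\rangle,|1\rangle$; an operator on $n$ qubits is a $2^n\times 2^n$ unitary matrix indexed by bit strings. The controlled-not gate is the two-qubit unitary $\mathrm{diag}$-block matrix $\begin{pmatrix}1&0&0&0\\0&1&0&0\\0&0&0&1\\0&0&1&0\end{pmatrix}$ (first qubit = control, second = target), i.e. $|a,b\rangle\mapsto|a,a\oplus b\rangle$. A layer is a tensor product of gates acting on pairwise disjoint sets of qubits (qubits not acted on are left unchanged); a circuit of $k$ layers is the product of $k$ layers. An operator $F$ on $n$ qubits is embedded in an operator $M$ on $n+m$ qubits using $m$ ancillae if $M$ maps the subspace where all $m$ ancilla qubits are $|0\rangle$ into itself and, restricted to that subspace, equals $F\otimes \mathbf{1}$ (i.e. $M(|\psi\rangle\otimes|0\cdots0\rangle)=(F|\psi\rangle)\otimes|0\cdots 0\rangle$ for all $|\psi\rangle$). *)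

From mathcomp Require Import all_boot all_order all_algebra all_fingroup algC.
Set Implicit Arguments. Unset Strict Implicit. Unset Printing Implicit Defensive.
Import GRing.Theory.
Local Open Scope ring_scope.

Definition bits (n : nat) := {ffun 'I_n -> bool}.

(* An operator on n qubits, given by its matrix entries <x| A |y>. *)
Definition op (n : nat) := bits n -> bits n -> algC.

Definition op_mul n (A B : op n) : op n := fun x y => \sum_(z : bits n) A x z * B z y.
Definition op_id n : op n := fun x y => (x == y)%:R.

Definition op_apply n (A : op n) (psi : bits n -> algC) : bits n -> algC :=
  fun x => \sum_(z : bits n) A x z * psi z.

Definition cnot_op n (c t : 'I_n) : op n :=
  fun x y => (x == [ffun i => if i == t then addb (y t) (y c) else y i])%:R.

Definition cnot_layer n (L : seq ('I_n * 'I_n)) : bool :=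
  all (fun p => p.1 != p.2) L && uniq (flatten [seq [:: p.1; p.2] | p <- L]).

(* The operator of a layer: tensor product of its gates (and identity on the
   unused qubits), i.e. the product of the commuting embedded gates. *)
Definition layer_op n (L : seq ('I_n * 'I_n)) : op n :=
  foldr (fun p A => op_mul (cnot_op p.1 p.2) A) (@op_id n) L.

Definition circuit_op n (Ls : seq (seq ('I_n * 'I_n))) : op n :=
  foldr (fun L A => op_mul (layer_op L) A) (@op_id n) Ls.

Definition cnot_circuit n (k : nat) (Ls : seq (seq ('I_n * 'I_n))) : bool :=
  (size Ls == k) && all (@cnot_layer n) Ls.

Definition perm_qubits n (s : {perm 'I_n}) : op n :=
  fun x y => (x == [ffun i => y ((s^-1)%g i)])%:R.

(* psi (x) |0...0> on n + m qubits; the last m qubits are the ancillae. *)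
Definition embed_state n m (psi : bits n -> algC) : bits (n + m) -> algC :=
  fun z => if [forall j : 'I_m, ~~ z (rshift n j)]
           then psi [ffun i => z (lshift m i)] else 0.

Definition embeds n m (F : op n) (M : op (n + m)) : Prop :=
  forall psi : bits n -> algC,
    forall z, op_apply M (@embed_state n m psi) z = @embed_state n m (op_apply F psi) z.

From mathcomp Require Import all_boot all_order all_algebra all_fingroup algC zify.
Set Implicit Arguments. Unset Strict Implicit. Unset Printing Implicit Defensive.

(* CNOT circuits and qubit permutations map basis states to basis states, so
   everything reduces to computing reversible maps on bit strings.
   Without ancillae: a permutation is the product of two involutions (on a
   cycle of length k, i |-> -i and i |-> 1 - i modulo k), and an involution is
   a product of disjoint transpositions, each realised by the three CNOTs
   (a,b) (b,a) (a,b); this gives 3 + 3 layers.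
   With n ancillae: copy x_i onto ancilla s(i); add ancillae j and s(j) onto
   qubit j, leaving x_j + x_(s^-1 j) + x_j = x_(s^-1 j) there; finally adding
   qubit j onto ancilla j clears the ancillae. *)

Lemma reflection_modK k c1 c2 i : 0 < k -> i <= k ->
  c1 + (c2 + (k - (c1 + (k - i)) %% k)) = c2 + i %[mod k].
Proof.
move=> k_gt0 le_ik; set m := (c1 + (k - i)) %% k.
have lt_mk : m < k by rewrite ltn_pmod.
apply/eqP; rewrite -(eqn_modDr m).
have -> : c1 + (c2 + (k - m)) + m = c2 + i + (c1 + (k - i)) by lia.
by rewrite modnDmr.
Qed.

Lemma iter_inj (T : Type) (f : T -> T) k : injective f -> injective (iter k f).
Proof. by move=> f_inj; elim: k => // k IH x y /= /f_inj /IH. Qed.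

Section CycleReflections.
Variables (T : finType) (f : T -> T).
Hypothesis f_inj : injective f.

Lemma iter_mod_order x j : iter (j %% fingraph.order f x) f x = iter j f x.
Proof.
rewrite {2}(divn_eq j (fingraph.order f x)) addnC iterD; congr iter.
by elim: (j %/ fingraph.order f x) => // q IH; rewrite mulSn iterD -IH iter_order.
Qed.

Lemma froot_iter x j : froot f (iter j f (froot f x)) = froot f x.
Proof.
have sym := fconnect_sym f_inj.
by rewrite -{2}(root_root sym x); apply/esym/(fingraph.rootP sym)/fconnect_iter.
Qed.

Lemma findex_iter_froot x j :
  findex f (froot f x) (iter j f (froot f x)) = j %% fingraph.order f (froot f x).
Proof. by rewrite -iter_mod_order findex_iter // ltn_pmod ?fingraph.order_gt0. Qed.

Lemma iter_findex_froot x : iter (findex f (froot f x) x) f (froot f x) = x.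
Proof. by apply/iter_findex; rewrite (fconnect_sym f_inj) connect_root. Qed.

(* Writing x = f^i (froot f x) on its cycle of length k, this is i |-> c - i
   modulo k. *)
Definition cycle_reflection c x :=
  iter (c + (fingraph.order f (froot f x) - findex f (froot f x) x)) f (froot f x).

Lemma cycle_reflection_comp c1 c2 x :
  iter c1 f (cycle_reflection c2 (cycle_reflection c1 x)) = iter c2 f x.
Proof.
rewrite /cycle_reflection froot_iter findex_iter_froot -iterD.
rewrite -iter_mod_order reflection_modK ?fingraph.order_gt0 //; last first.
  by rewrite ltnW // findex_max // (fconnect_sym f_inj) connect_root.
by rewrite iter_mod_order iterD iter_findex_froot.
Qed.

Lemma cycle_reflectionK c : involutive (cycle_reflection c).
Proof. by move=> x; apply: (@iter_inj _ _ c f_inj); rewrite cycle_reflection_comp. Qed.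

Lemma inj_comp_involutions :
  exists r1 r2 : T -> T, [/\ involutive r1, involutive r2 & f =1 r2 \o r1].
Proof.
exists (cycle_reflection 0), (cycle_reflection 1); split; try exact: cycle_reflectionK.
by move=> x; rewrite -[RHS]/(iter 0 f _) cycle_reflection_comp.
Qed.

End CycleReflections.

Import GRing.Theory.
Local Open Scope ring_scope.

Definition op_of_fun n (g : bits n -> bits n) : op n := fun x y => (x == g y)%:R.

Lemma op_mul_of_fun n (A B : op n) g h :
  A =2 op_of_fun g -> B =2 op_of_fun h -> op_mul A B =2 op_of_fun (g \o h).
Proof.
move=> Ag Bh x y; rewrite /op_mul (bigD1 (h y)) //= big1 => [|z /negbTE neq_zh].
  by rewrite Ag Bh /op_of_fun eqxx mulr1 addr0.
by rewrite Bh /op_of_fun neq_zh mulr0.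
Qed.

Lemma op_apply_of_fun n (A : op n) g psi y :
  injective g -> A =2 op_of_fun g -> op_apply A psi (g y) = psi y.
Proof.
move=> g_inj Ag; rewrite /op_apply (bigD1 y) //= big1 => [|z neq_zy].
  by rewrite Ag /op_of_fun eqxx mul1r addr0.
by rewrite Ag /op_of_fun eq_sym (inj_eq g_inj) (negbTE neq_zy) mul0r.
Qed.

Definition cnot_fun n (c t : 'I_n) (y : bits n) : bits n :=
  [ffun i => if i == t then y t (+) y c else y i].

Definition layer_fun n (L : seq ('I_n * 'I_n)) : bits n -> bits n :=
  foldr (fun p g => cnot_fun p.1 p.2 \o g) id L.

Definition circuit_fun n (Ls : seq (seq ('I_n * 'I_n))) : bits n -> bits n :=
  foldr (fun L g => layer_fun L \o g) id Ls.

Lemma cnot_opE n (c t : 'I_n) : cnot_op c t =2 op_of_fun (cnot_fun c t).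
Proof. by []. Qed.

Lemma layer_opE n (L : seq ('I_n * 'I_n)) : layer_op L =2 op_of_fun (layer_fun L).
Proof. by elim: L => [|p L IH] //=; apply: op_mul_of_fun => //; apply: cnot_opE. Qed.

Lemma circuit_opE n (Ls : seq (seq ('I_n * 'I_n))) :
  circuit_op Ls =2 op_of_fun (circuit_fun Ls).
Proof. by elim: Ls => [|L Ls IH] //=; apply: op_mul_of_fun => //; apply: layer_opE. Qed.

Lemma circuit_fun_cat n (Ls1 Ls2 : seq (seq ('I_n * 'I_n))) y :
  circuit_fun (Ls1 ++ Ls2) y = circuit_fun Ls1 (circuit_fun Ls2 y).
Proof. by elim: Ls1 => [|L Ls1 IH] //=; rewrite IH. Qed.

Lemma cnot_funK n (c t : 'I_n) : c != t -> involutive (cnot_fun c t).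
Proof.
move=> neq_ct y; apply/ffunP=> i; rewrite !ffunE.
by case: eqP => [->|_] //; rewrite eqxx (negbTE neq_ct) -addbA addbb addbF.
Qed.

Lemma circuit_fun_inj n (Ls : seq (seq ('I_n * 'I_n))) :
  all (@cnot_layer n) Ls -> injective (circuit_fun Ls).
Proof.
elim: Ls => [_|L Ls IH /andP[/andP[gates _] /IH Ls_inj]] //=; apply: inj_comp Ls_inj.
elim: L gates => [_|p L IHL /andP[neq_p /IHL L_inj]] //=.
exact: inj_comp (can_inj (cnot_funK neq_p)) L_inj.
Qed.

Lemma layer_fun_nontarget n (L : seq ('I_n * 'I_n)) y t :
  t \notin [seq p.2 | p <- L] -> layer_fun L y t = y t.
Proof.
elim: L => [|p L IH] //=; rewrite inE negb_or => /andP[neq_tp /IH <-].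
by rewrite ffunE (negbTE neq_tp).
Qed.

Lemma cnot_layer_cons n (p : 'I_n * 'I_n) L : cnot_layer (p :: L) ->
  [/\ cnot_layer L, p.1 \notin [seq q.2 | q <- L] & p.2 \notin [seq q.2 | q <- L]].
Proof.
case/andP=> /= /andP[_ gates] /andP[].
rewrite inE negb_or => /andP[_ p1L] /andP[p2L uL].
have notin_tgt i :
    i \notin flatten [seq [:: q.1; q.2] | q <- L] -> i \notin [seq q.2 | q <- L].
  apply: contra => /mapP[q qL ->]; apply/flatten_mapP; exists q => //.
  by rewrite !inE eqxx orbT.
by split; rewrite ?notin_tgt //; apply/andP.
Qed.

Lemma layer_fun_target n (L : seq ('I_n * 'I_n)) y c t :
  cnot_layer L -> (c, t) \in L -> layer_fun L y t = y t (+) y c.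
Proof.
elim: L => [|[c' t'] L IH] //= /cnot_layer_cons[valid /= c'L t'L].
rewrite inE /cnot_fun ffunE => /orP[/eqP[-> ->]|ctL].
  by rewrite eqxx !layer_fun_nontarget.
have -> : (t == t') = false by apply: contraNF t'L => /eqP<-; apply/mapP; exists (c, t).
exact: IH.
Qed.

Lemma perm_flatten_pairs (S : Type) (U : eqType) (f g : S -> U) s :
  perm_eq (flatten [seq [:: f a; g a] | a <- s]) (map f s ++ map g s).
Proof.
elim: s => //= a s IH; rewrite perm_cons perm_sym.
by rewrite (perm_catCA (map f s) [:: g a]) /= perm_cons perm_sym.
Qed.

Definition gate_layer (T : finType) n (A : {pred T}) (ctrl tgt : T -> 'I_n) :=
  [seq (ctrl a, tgt a) | a <- enum A].

Section GateLayer.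
Variables (T : finType) (n : nat) (A : {pred T}) (ctrl tgt : T -> 'I_n).

Lemma gate_layer_valid : injective ctrl -> injective tgt ->
  {in A &, forall a b, ctrl a != tgt b} -> cnot_layer (gate_layer A ctrl tgt).
Proof.
move=> ctrl_inj tgt_inj ctrl_tgt; apply/andP; split.
  by apply/allP=> _ /mapP[a aA ->]; apply: ctrl_tgt; rewrite -mem_enum.
have -> : [seq [:: p.1; p.2] | p <- gate_layer A ctrl tgt] =
          [seq [:: ctrl a; tgt a] | a <- enum A] by rewrite -map_comp.
rewrite (perm_uniq (perm_flatten_pairs _ _ _)) cat_uniq !map_inj_uniq ?enum_uniq //= andbT.
rewrite has_map; apply/hasPn=> b; rewrite mem_enum => bA /=.
apply/mapP=> -[a]; rewrite mem_enum => aA tgt_ctrl.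
by move: (ctrl_tgt a b aA bA); rewrite tgt_ctrl eqxx.
Qed.

Lemma gate_layer_target y a : cnot_layer (gate_layer A ctrl tgt) -> a \in A ->
  layer_fun (gate_layer A ctrl tgt) y (tgt a) = y (tgt a) (+) y (ctrl a).
Proof.
by move=> valid aA; apply: layer_fun_target valid _; apply/mapP; exists a; rewrite ?mem_enum.
Qed.

Lemma gate_layer_nontarget y t : {in A, forall a, tgt a != t} ->
  layer_fun (gate_layer A ctrl tgt) y t = y t.
Proof.
move=> not_tgt; apply: layer_fun_nontarget; rewrite -map_comp.
apply/mapP=> -[a]; rewrite mem_enum => aA tE.
by move: (not_tgt a aA); rewrite tE eqxx.
Qed.

End GateLayer.

Section Padding.
Variables n m : nat.

Definition pad_bits (x : bits n) : bits (n + m) :=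
  [ffun k => if split k is inl i then x i else false].

Lemma pad_bits_lshift x i : pad_bits x (lshift m i) = x i.
Proof. by rewrite ffunE (unsplitK (inl _ i)). Qed.

Lemma pad_bits_rshift x j : pad_bits x (rshift n j) = false.
Proof. by rewrite ffunE (unsplitK (inr _ j)). Qed.

Lemma pad_bitsP z :
  reflect (exists x, z = pad_bits x) [forall j : 'I_m, ~~ z (rshift n j)].
Proof.
apply: (iffP forallP) => [z_anc|[x ->] j]; last by rewrite pad_bits_rshift.
exists [ffun i => z (lshift m i)]; apply/ffunP => k.
case: (split_ordP k) => [i ->|j ->]; first by rewrite pad_bits_lshift ffunE.
by rewrite pad_bits_rshift (negbTE (z_anc j)).
Qed.

Lemma embed_state_pad psi x : embed_state psi (pad_bits x) = psi x.
Proof.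
have -> : embed_state psi (pad_bits x) = psi [ffun i => pad_bits x (lshift m i)].
  by rewrite /embed_state ifT //; apply/pad_bitsP; exists x.
by congr psi; apply/ffunP => i; rewrite ffunE pad_bits_lshift.
Qed.

Lemma embeds_of_fun (B : op n) (A : op (n + m)) g F :
  injective g -> injective F -> B =2 op_of_fun g -> A =2 op_of_fun F ->
  (forall x, F (pad_bits x) = pad_bits (g x)) -> embeds B A.
Proof.
move=> g_inj F_inj Bg AF F_pad psi z.
rewrite -(f_invF F_inj z) op_apply_of_fun //; move: (invF F_inj z) => y.
case: (boolP [forall j, ~~ y (rshift n j)]) => [/pad_bitsP[x ->]|y_anc].
  by rewrite F_pad !embed_state_pad op_apply_of_fun.
have Fy_anc : ~~ [forall j, ~~ F y (rshift n j)].
  apply: contra y_anc => /pad_bitsP[w Fy]; apply/pad_bitsP; exists (invF g_inj w).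
  by apply: F_inj; rewrite Fy F_pad f_invF.
by rewrite /embed_state (negbTE y_anc) (negbTE Fy_anc).
Qed.

End Padding.

Definition permute_bits n (s : {perm 'I_n}) (x : bits n) : bits n :=
  [ffun i => x ((s^-1)%g i)].

Lemma perm_qubitsE n (s : {perm 'I_n}) : perm_qubits s =2 op_of_fun (permute_bits s).
Proof. by []. Qed.

Lemma permute_bits_inj n (s : {perm 'I_n}) : injective (permute_bits s).
Proof.
by move=> x y /ffunP xy; apply/ffunP => i; move: (xy (s i)); rewrite !ffunE permK.
Qed.

Section SwapCircuit.
Variables (n : nat) (r : 'I_n -> 'I_n).
Hypothesis rK : involutive r.

Section ReflectionLayer.
Variable A : {pred 'I_n}.
Hypothesis rA : {in A, forall t, r t \notin A}.

Lemma reflection_layer_valid : cnot_layer (gate_layer A r id).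
Proof.
apply: gate_layer_valid (inv_inj rK) _ _ => // a b aA bA.
by apply: contraNneq (rA aA) => ->.
Qed.

Lemma reflection_layer_fun y :
  layer_fun (gate_layer A r id) y = [ffun t => if t \in A then y t (+) y (r t) else y t].
Proof.
apply/ffunP => t; rewrite ffunE; case: ifP => tA.
  exact: gate_layer_target reflection_layer_valid tA.
by apply: gate_layer_nontarget => a aA; apply: contraFneq tA => <-.
Qed.

End ReflectionLayer.

Definition upper := [pred t : 'I_n | (r t < t)%N].
Definition lower := [pred t : 'I_n | (t < r t)%N].

Lemma upper_flip : {in upper, forall t, r t \notin upper}.
Proof. by move=> t; rewrite !inE rK => /ltnW; rewrite leqNgt. Qed.

Lemma lower_flip : {in lower, forall t, r t \notin lower}.
Proof. by move=> t; rewrite !inE rK => /ltnW; rewrite leqNgt. Qed.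

Definition swap_circuit :=
  [:: gate_layer upper r id; gate_layer lower r id; gate_layer upper r id].

Lemma swap_circuit_valid : all (@cnot_layer n) swap_circuit.
Proof.
by rewrite /= (reflection_layer_valid upper_flip) (reflection_layer_valid lower_flip).
Qed.

Lemma swap_circuit_fun y : circuit_fun swap_circuit y = [ffun t => y (r t)].
Proof.
rewrite /= !(reflection_layer_fun upper_flip) (reflection_layer_fun lower_flip).
apply/ffunP => t; rewrite !ffunE !inE rK.
by case: (ltngtP t (r t)) => [_|_|/val_inj <-] //=; case: (y t); case: (y (r t)).
Qed.

End SwapCircuit.

Section AncillaCircuit.
Variables (n : nat) (s : {perm 'I_n}).

(* The head of the list is the last layer to act. *)
Definition ancilla_circuit : seq (seq ('I_(n + n) * 'I_(n + n))) :=
  [:: gate_layer 'I_n (lshift n) (@rshift n n);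
      gate_layer 'I_n (@rshift n n \o s) (lshift n);
      gate_layer 'I_n (@rshift n n) (lshift n);
      gate_layer 'I_n (lshift n) (@rshift n n \o s)].

Lemma ancilla_circuit_valid : all (@cnot_layer (n + n)) ancilla_circuit.
Proof.
have sh_inj : injective (@rshift n n \o s) := inj_comp (@rshift_inj n n) (@perm_inj _ s).
by rewrite /= !gate_layer_valid //; (exact: lshift_inj || exact: rshift_inj ||
  by move=> a b _ _; rewrite /= ?eq_lrshift ?eq_rlshift).
Qed.

Lemma ancilla_circuit_pad x :
  circuit_fun ancilla_circuit (pad_bits n x) = pad_bits n (permute_bits s x).
Proof.
case/and5P: ancilla_circuit_valid => v4 v3 v2 v1 _ /=.
pose y1 := layer_fun (gate_layer 'I_n (lshift n) (@rshift n n \o s)) (pad_bits n x).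
have y1l j : y1 (lshift n j) = x j.
  by rewrite /y1 gate_layer_nontarget ?pad_bits_lshift // => a _; rewrite eq_rlshift.
have y1r j : y1 (rshift n j) = x ((s^-1)%g j).
  by rewrite /y1 -{1}(permKV s j) (gate_layer_target _ v1) // pad_bits_rshift pad_bits_lshift.
pose y2 := layer_fun (gate_layer 'I_n (@rshift n n) (lshift n)) y1.
have y2l j : y2 (lshift n j) = x j (+) x ((s^-1)%g j).
  by rewrite /y2 (gate_layer_target _ v2) // y1l y1r.
have y2r j : y2 (rshift n j) = x ((s^-1)%g j).
  by rewrite /y2 gate_layer_nontarget // => a _; rewrite eq_lrshift.
pose y3 := layer_fun (gate_layer 'I_n (@rshift n n \o s) (lshift n)) y2.
have y3l j : y3 (lshift n j) = x ((s^-1)%g j).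
  rewrite /y3 (gate_layer_target _ v3) //= y2l y2r permK.
  by case: (x j); case: (x _).
have y3r j : y3 (rshift n j) = x ((s^-1)%g j).
  by rewrite /y3 gate_layer_nontarget // => a _; rewrite eq_lrshift.
apply/ffunP => k; case: (split_ordP k) => [j ->|j ->].
  rewrite pad_bits_lshift ffunE gate_layer_nontarget; first exact: y3l.
  by move=> a _; rewrite eq_rlshift.
by rewrite pad_bits_rshift (gate_layer_target _ v4) // y3r y3l addbb.
Qed.

End AncillaCircuit.

Unset Implicit Arguments.

Theorem proposition1 (n : nat) (hn : (1 <= n)%N) (s : {perm 'I_n}) :
  (exists Ls : seq (seq ('I_(n + n) * 'I_(n + n))),
      cnot_circuit 4 Ls /\ embeds (perm_qubits s) (circuit_op Ls))
  /\
  (exists Ls : seq (seq ('I_n * 'I_n)),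
      cnot_circuit 6 Ls /\ forall x y, circuit_op Ls x y = perm_qubits s x y).
Proof.
split.
  exists (ancilla_circuit s); split; first by rewrite /cnot_circuit ancilla_circuit_valid.
  have circuit_inj := circuit_fun_inj (@ancilla_circuit_valid n s).
  apply: (embeds_of_fun (@permute_bits_inj n s) circuit_inj).
  - exact: perm_qubitsE.
  - exact: circuit_opE.
  - exact: ancilla_circuit_pad.
have [r1 [r2 [r1K r2K sE]]] := inj_comp_involutions (@perm_inj _ s).
exists (swap_circuit r2 ++ swap_circuit r1); split.
  by rewrite /cnot_circuit size_cat all_cat !swap_circuit_valid.
move=> x y; rewrite circuit_opE /op_of_fun circuit_fun_cat !swap_circuit_fun //.
congr ((x == _)%:R); apply/ffunP => i; rewrite !ffunE; congr (y _).
by apply: (@perm_inj _ s); rewrite permKV sE /= r1K r2K.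
Qed.
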